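(* Let $\mathcal M$ be a type $\mathrm{I}_n$ factor ($n\in\mathbb N$), i.e. $\mathcal M\cong M_n(\mathbb C)$, with the trace $\tau$ satisfying $\tau(I)=n$. If $A\in\mathcal M^+$ satisfies $\tau(A)\in\mathbb N\cup\{0\}$ and $\tau(A)\geq\tau(R_A)$, then $A$ is a sum of finitely many projections.
   Context: $R_A$ denotes the range projection of $A$. *)

From mathcomp Require Import all_boot all_algebra.
From mathcomp Require Export complex.
From mathcomp Require Import reals.
Set Implicit Arguments. Unset Strict Implicit. Unset Printing Implicit Defensive.
Import GRing.Theory Num.Theory.
Local Open Scope ring_scope.

Definition adjmx (C : numClosedFieldType) m n (A : 'M[C]_(m, n)) : 'M[C]_(n, m) :=
  (map_mx Num.conj A)^T.

Definition psd_mx (C : numClosedFieldType) n (A : 'M[C]_n) : Prop :=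
  adjmx A = A /\ forall v : 'cV[C]_n, 0 <= (adjmx v *m A *m v) 0 0.

Definition orth_proj_mx (C : numClosedFieldType) n (P : 'M[C]_n) : Prop :=
  P *m P = P /\ adjmx P = P.

(* P is the range projection R_A of A: a projection whose range (column space)
   equals the range of A. *)
Definition is_range_proj (C : numClosedFieldType) n (A P : 'M[C]_n) : Prop :=
  orth_proj_mx P /\ (P^T == A^T)%MS.

From mathcomp Require Import all_boot all_algebra.
From mathcomp Require Import complex reals.
From mathcomp Require Import spectral sesquilinear.
From mathcomp Require Import ring lra.
From mathcomp Require Import order.
Set Implicit Arguments. Unset Strict Implicit. Unset Printing Implicit Defensive.
Import Order.TTheory GRing.Theory Num.Theory.
Local Open Scope complex_scope.
Local Open Scope ring_scope.

(* Diagonalising A = U^* diag(d) U gives A = sum_l z_l^* z_l for the pairwise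
   orthogonal rows z_l = sqrt(d_l) u_l of U, with sum_l |z_l|^2 = tr A = k and
   #{l | z_l <> 0} = rank A = tr R_A <= k.  Such a family of "weights" |z_l|^2
   is reduced by induction on k: a member of weight 1 spans a rank one
   projection and is removed; otherwise a real rotation in the plane of two
   members of weights a > 1 > b produces a unit vector and a vector of weight
   a + b - 1, and the unit vector is removed.  Either way the total weight
   drops by one and the number of members stays at most k. *)

Lemma pairwise_rem (T : eqType) (r : rel T) (s : seq T) x : symmetric r ->
  x \in s -> pairwise r s -> pairwise r (x :: rem x s).
Proof.
move=> r_sym; elim: s => // y s IHs; rewrite inE eq_sym => xys.
rewrite [rem _ _]/= pairwise_cons; have [-> //|neq_yx] := eqVneq y x.
move: xys; rewrite (negbTE neq_yx) /= => xs /andP[/allP rys ps].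
have := IHs xs ps; rewrite !pairwise_cons => /andP[-> ->].
rewrite /= r_sym rys // !andbT; apply/allP => t /mem_rem; exact: rys.
Qed.

Lemma sum_lt_size (R : numDomainType) (T : eqType) (s : seq T) (f : T -> R) :
  s != [::] -> (forall x, x \in s -> f x < 1) -> \sum_(x <- s) f x < (size s)%:R.
Proof.
move=> s_neq_nil f_lt1; rewrite -sum1_size natr_sum !big_seq.
by apply: ltr_sum => //; case: s s_neq_nil {f_lt1} => // x s _; rewrite /= mem_head.
Qed.

Lemma size_lt_sum (R : numDomainType) (T : eqType) (s : seq T) (f : T -> R) :
  s != [::] -> (forall x, x \in s -> 1 < f x) -> (size s)%:R < \sum_(x <- s) f x.
Proof.
move=> s_neq_nil f_gt1; rewrite -sum1_size natr_sum !big_seq.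
by apply: ltr_sum => //; case: s s_neq_nil {f_gt1} => // x s _; rewrite /= mem_head.
Qed.

Lemma rotation_coefficients (R : rcfType) (a b : R) : 1 < a -> 0 <= b -> b < 1 ->
  exists x y : R, [/\ x ^+ 2 + y ^+ 2 = 1, x ^+ 2 * a + y ^+ 2 * b = 1
                    & y ^+ 2 * a + x ^+ 2 * b = a + b - 1].
Proof.
move=> a_gt1 b_ge0 b_lt1; have ab_neq0 : a - b != 0 by apply/eqP => ab0; lra.
exists (Num.sqrt ((1 - b) / (a - b))), (Num.sqrt ((a - 1) / (a - b))).
rewrite !sqr_sqrtr; first by split; field.
all: by apply: divr_ge0; lra.
Qed.

Local Notation ortho_seq s := (pairwise (fun u v => dotmx u v == 0) s).

Section OuterProduct.
Variable C : numClosedFieldType.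
Local Open Scope sesquilinear_scope.

Lemma adjmxE m n (A : 'M[C]_(m, n)) : adjmx A = A ^t*.
Proof. exact: map_trmx. Qed.

Lemma adjmxK m n (A : 'M[C]_(m, n)) : adjmx (adjmx A) = A.
Proof. by rewrite !adjmxE trmxCK. Qed.

Lemma adjmxM m n p (A : 'M[C]_(m, n)) (B : 'M[C]_(n, p)) :
  adjmx (A *m B) = adjmx B *m adjmx A.
Proof. by rewrite /adjmx map_mxM trmx_mul. Qed.

Lemma dotmx_adjmx n (u v : 'rV[C]_n) : dotmx u v = (u *m adjmx v) 0 0.
Proof. by rewrite dotmxE adjmxE. Qed.

Lemma dotmx_eq0_sym n : symmetric (fun u v : 'rV[C]_n => dotmx u v == 0).
Proof. by move=> u v; rewrite herm_eq0C. Qed.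

Definition outermx n (v : 'rV[C]_n) : 'M[C]_n := adjmx v *m v.

Lemma outermxE n (v : 'rV[C]_n) i j : outermx v i j = (v 0 i)^* * v 0 j.
Proof. by rewrite mxE big_ord1 !mxE. Qed.

Lemma outermx0 n : outermx (0 : 'rV[C]_n) = 0.
Proof. by rewrite /outermx mulmx0. Qed.

Lemma outermxZ n a (v : 'rV[C]_n) : outermx (a *: v) = (a^* * a) *: outermx v.
Proof. by apply/matrixP => i j; rewrite !(outermxE, mxE) rmorphM; ring. Qed.

Lemma outermx_rot n (c s : C) (u v : 'rV[C]_n) : c^* * c + s^* * s = 1 ->
  outermx (c *: u + s *: v) + outermx (s^* *: u - c^* *: v) = outermx u + outermx v.
Proof.
move=> cs1; apply/matrixP => i j.
rewrite !(outermxE, mxE) !(rmorphD, rmorphN, rmorphM) /= !conjCK.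
transitivity ((c^* * c + s^* * s) * ((u 0 i)^* * u 0 j + (v 0 i)^* * v 0 j)); first ring.
by rewrite cs1 mul1r.
Qed.

Lemma mxtrace_outermx n (v : 'rV[C]_n) : \tr (outermx v) = dotmx v v.
Proof. by rewrite mxtrace_mulC trace_mx11 dotmx_adjmx. Qed.

Lemma outermx_orth_proj n (v : 'rV[C]_n) : dotmx v v = 1 -> orth_proj_mx (outermx v).
Proof.
move=> v1; split; last by rewrite /outermx adjmxM adjmxK.
have vv : v *m adjmx v = 1 by rewrite [LHS]mx11_scalar -dotmx_adjmx v1.
by rewrite /outermx mulmxA -[_ *m v *m _]mulmxA vv mulmx1.
Qed.

Definition proj_sum n (A : 'M[C]_n) := exists s : seq 'M[C]_n,
  (forall P, P \in s -> orth_proj_mx P) /\ A = \sum_(P <- s) P.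

Lemma proj_sum0 n : proj_sum (0 : 'M[C]_n).
Proof. by exists [::]; rewrite big_nil. Qed.

Lemma proj_sum_outerD n (v : 'rV[C]_n) B :
  dotmx v v = 1 -> proj_sum B -> proj_sum (outermx v + B).
Proof.
move=> v1 [s [projs ->]]; exists (outermx v :: s); rewrite big_cons; split=> // P.
by rewrite inE => /predU1P[->|/projs//]; apply: outermx_orth_proj.
Qed.

End OuterProduct.

Section Spectral.
Variable C : numClosedFieldType.
Local Open Scope sesquilinear_scope.

Lemma unitarymx_adj n (U : 'M[C]_n) :
  U \is unitarymx -> U *m adjmx U = 1%:M /\ adjmx U *m U = 1%:M.
Proof.
rewrite adjmxE => /unitarymxP UU; split=> //; exact: mulmx1C.
Qed.

Lemma hermitian_spectral n (B : 'M[C]_n) : adjmx B = B ->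
  B = adjmx (spectralmx B) *m diag_mx (spectral_diag B) *m spectralmx B.
Proof.
move=> hB; have /hermitian_normalmx/orthomx_spectralP {1}-> : B \is hermsymmx.
  by apply/is_hermitianmxP; rewrite expr0 scale1r -adjmxE hB.
by rewrite invmx_unitary ?spectral_unitarymx // adjmxE.
Qed.

Section UnitaryConjugation.
Variables (n : nat) (U : 'M[C]_n).
Hypothesis U_unitary : U \is unitarymx.

Lemma unitary_conjK D : U *m (adjmx U *m D *m U) *m adjmx U = D.
Proof.
have [UU' U'U] := unitarymx_adj U_unitary.
by rewrite !mulmxA UU' mul1mx -mulmxA UU' mulmx1.
Qed.

Lemma mxtrace_unitary_conj D : \tr (adjmx U *m D *m U) = \tr D.
Proof.
have [UU' _] := unitarymx_adj U_unitary.
by rewrite mxtrace_mulC mulmxA UU' mul1mx.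
Qed.

Lemma mxrank_unitary_conj D : \rank (adjmx U *m D *m U) = \rank D.
Proof.
have [/mulmx1_unit[uU uU'] _] := unitarymx_adj U_unitary.
by rewrite mxrankMfree ?row_free_unit // (eqmxMfull _ _) ?row_full_unit.
Qed.

End UnitaryConjugation.

Lemma rank_diag_mx n (d : 'rV[C]_n) :
  \rank (diag_mx d) = #|[pred l | d 0 l != 0]|.
Proof.
rewrite -sum1_card big_mkcond /=.
elim: n d => [|n IHn] d; first by rewrite [diag_mx d]flatmx0 mxrank0 big_ord0.
set dl := lsubmx (d : 'rV_(1 + n)); set dr := rsubmx (d : 'rV_(1 + n)).
have -> : diag_mx d = block_mx (diag_mx dl) 0 0 (diag_mx dr).
  by rewrite -diag_mx_row hsubmxK.
rewrite (rank_diag_block_mx (diag_mx dl) (diag_mx dr)) IHn rank_rV big_ord_recl.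
congr (_ + _)%N; last first.
  apply: eq_bigr => i _; rewrite !inE !mxE.
  by congr (if d 0 _ != 0 then _ else _); apply: val_inj.
rewrite inE; have -> : d 0 ord0 = dl 0 0 by rewrite mxE; congr (d 0 _); apply: val_inj.
have -> : (diag_mx dl == 0) = (dl 0 0 == 0).
  apply/eqP/eqP => [/matrixP/(_ 0 0)|dl0]; first by rewrite !mxE.
  move: dl0; rewrite mxE => dl0.
  by apply/matrixP => i j; rewrite !ord1 !mxE dl0 mul0rn.
by case: (dl 0 0 == 0).
Qed.

Lemma orth_proj_trace n (P : 'M[C]_n) : orth_proj_mx P -> \tr P = (\rank P)%:R.
Proof.
move=> [PP adjP]; set U := spectralmx P; set Y := spectral_diag P.
have unitU : U \is unitarymx := spectral_unitarymx P.
have defP : P = adjmx U *m diag_mx Y *m U := hermitian_spectral adjP.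
have YY : diag_mx Y *m diag_mx Y = diag_mx Y.
  have [_ U'U] := unitarymx_adj unitU.
  rewrite -(unitary_conjK unitU (diag_mx Y)) -defP !mulmxA.
  by rewrite -[_ *m adjmx U *m U]mulmxA U'U mulmx1 -[U *m P *m P]mulmxA PP.
rewrite defP mxtrace_unitary_conj // mxrank_unitary_conj // rank_diag_mx.
rewrite mxtrace_diag -sum1_card natr_sum [RHS]big_mkcond /=.
apply: eq_bigr => l _.
move/matrixP/(_ l l): YY; rewrite mulmx_diag !mxE eqxx !mulr1n inE.
have [-> //|nz] := eqVneq (Y 0 l) 0.
by move=> YYl; apply: (mulIf nz); rewrite mul1r.
Qed.

Lemma mulmx_adj_diag n (U : 'M[C]_n) (d : 'rV[C]_n) :
  adjmx U *m diag_mx d *m U = \sum_l d 0 l *: outermx (row l U).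
Proof.
apply/matrixP => i j; rewrite summxE mxE; apply: eq_bigr => l _.
by rewrite [in RHS]mxE outermxE mul_mx_diag !mxE mulrCA mulrA.
Qed.

Lemma psd_spectral_diag_ge0 n (A : 'M[C]_n) :
  psd_mx A -> forall l, 0 <= spectral_diag A 0 l.
Proof.
move=> [adjA psdA] l; set U := spectralmx A.
have /unitary_conjK UAU := spectral_unitarymx A.
(* The l-th eigenvalue is the value of the form of A at the l-th row of U. *)
have := psdA (adjmx (row l U)); rewrite adjmxK.
suff -> : (row l U *m A *m adjmx (row l U)) 0 0 = diag_mx (spectral_diag A) l l.
  by rewrite mxE eqxx mulr1n.
rewrite -(UAU (diag_mx _)) -hermitian_spectral // !mxE.
apply: eq_bigr => t _; rewrite !mxE; congr (_ * _).
by apply: eq_bigr => s _; rewrite !mxE.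
Qed.

Lemma psd_sum_outer n (A : 'M[C]_n) : psd_mx A ->
  exists s : seq 'rV[C]_n,
    [/\ ortho_seq s, A = \sum_(z <- s) outermx z & size s = \rank A].
Proof.
move=> psdA; have [adjA _] := psdA.
set U := spectralmx A; set d := spectral_diag A.
have unitU : U \is unitarymx := spectral_unitarymx A.
have defA : A = adjmx U *m diag_mx d *m U := hermitian_spectral adjA.
pose z l := sqrtC (d 0 l) *: row l U.
have outer_z l : outermx (z l) = d 0 l *: outermx (row l U).
  have d_ge0 : 0 <= d 0 l := psd_spectral_diag_ge0 psdA l.
  by rewrite outermxZ conj_Creal ?ger0_real ?sqrtC_ge0 // -expr2 sqrtCK.
exists [seq z l | l <- enum [pred l | d 0 l != 0]]; split.
- rewrite pairwise_map; apply: (sub_pairwise (r := [rel x y | x != y])).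
    move=> p q /= neq_pq; rewrite linearZl linearZr /=.
    by rewrite (row_unitarymxP unitU) (negbTE neq_pq) !mulr0.
  by rewrite -uniq_pairwise enum_uniq.
- rewrite big_map big_enum /= {1}defA mulmx_adj_diag [RHS]big_mkcond /=.
  by apply: eq_bigr => l _; rewrite inE outer_z; case: eqP => // ->; rewrite scale0r.
- by rewrite size_map -cardE defA mxrank_unitary_conj // rank_diag_mx.
Qed.

End Spectral.

Section SquaredNorm.
Variables (R : rcfType) (n : nat).
Implicit Types (u v w z : 'rV[R[i]]_n).

Lemma conj_real_complex (x : R) : x%:C^* = x%:C.
Proof. by apply/conj_Creal/complex_realP; exists x. Qed.

Definition sqnorm z : R := complex.Re (dotmx z z).

Lemma dotmx_sqnorm z : dotmx z z = (sqnorm z)%:C.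
Proof. by rewrite RRe_real // ger0_real // dnorm_ge0. Qed.

Lemma sqnorm_ge0 z : 0 <= sqnorm z.
Proof. by rewrite -ler0c -dotmx_sqnorm dnorm_ge0. Qed.

Lemma sqnorm0 : sqnorm 0 = 0.
Proof. by rewrite /sqnorm linear0l. Qed.

Lemma sqnormZ (c : R) z : sqnorm (c%:C *: z) = c ^+ 2 * sqnorm z.
Proof.
apply: (@complexI R); rewrite -dotmx_sqnorm linearZl linearZr /= dotmx_sqnorm.
by rewrite conj_real_complex rmorphM rmorphXn mulrA expr2.
Qed.

Lemma sqnormN z : sqnorm (- z) = sqnorm z.
Proof. by rewrite /sqnorm linearNl linearNr /= opprK. Qed.

Lemma sqnormD u v : dotmx u v = 0 -> sqnorm (u + v) = sqnorm u + sqnorm v.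
Proof.
move=> uv0; apply: (@complexI R).
by rewrite -dotmx_sqnorm dnormD /= uv0 conjC0 !addr0 !dotmx_sqnorm rmorphD.
Qed.

Lemma rotate_orthogonal_pair z1 z2 :
  1 < sqnorm z1 -> sqnorm z2 < 1 -> dotmx z1 z2 = 0 ->
  exists v w, [/\ sqnorm v = 1, sqnorm w = sqnorm z1 + sqnorm z2 - 1,
    outermx z1 + outermx z2 = outermx v + outermx w &
    forall u, dotmx z1 u = 0 -> dotmx z2 u = 0 -> dotmx w u = 0].
Proof.
move=> z1_gt1 z2_lt1 o12.
have [x [y [xy sq_v sq_w]]] := rotation_coefficients z1_gt1 (sqnorm_ge0 z2) z2_lt1.
have ortho_comb (c d : R) : dotmx (c%:C *: z1) (d%:C *: z2) = 0.
  by rewrite linearZl linearZr /= o12 !mulr0.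
have ortho_combN : dotmx (y%:C *: z1) (- (x%:C *: z2)) = 0.
  by rewrite linearNr /= ortho_comb oppr0.
exists (x%:C *: z1 + y%:C *: z2), (y%:C *: z1 - x%:C *: z2); split.
- by rewrite (sqnormD (ortho_comb _ _)) !sqnormZ sq_v.
- by rewrite (sqnormD ortho_combN) sqnormN !sqnormZ sq_w.
- have := @outermx_rot _ _ x%:C y%:C z1 z2; rewrite !conj_real_complex => -> //.
  by rewrite -!expr2 -!(rmorphXn (real_complex R)) -rmorphD xy.
- by move=> u z1u z2u; rewrite linearBl !linearZl /= z1u z2u !mulr0 subr0.
Qed.

End SquaredNorm.

Section Decomposition.
Variables (R : rcfType) (n : nat).
Implicit Types (s : seq 'rV[R[i]]_n).

Section InductionStep.
Variable k : nat.
Hypothesis IHk : forall s, ortho_seq s -> \sum_(z <- s) sqnorm z = k%:R ->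
  (size s <= k)%N -> proj_sum (\sum_(z <- s) outermx z).

Lemma proj_sum_step_unit s z : z \in s -> sqnorm z = 1 -> ortho_seq s ->
    \sum_(u <- s) sqnorm u = k.+1%:R -> (size s <= k.+1)%N ->
  proj_sum (\sum_(u <- s) outermx u).
Proof.
move=> zs z_eq1 os sum_s size_s; have perm_s := perm_to_rem zs.
have := pairwise_rem (@dotmx_eq0_sym _ n) zs os.
rewrite pairwise_cons => /andP[_ os'].
rewrite (perm_big _ perm_s) big_cons /=; apply: proj_sum_outerD.
  by rewrite dotmx_sqnorm z_eq1.
apply: IHk os' _ _; last by move: size_s; rewrite size_rem //; case: (size s).
apply: (@addrI _ 1); move: sum_s.
rewrite (perm_big _ perm_s) big_cons z_eq1 => ->.
by rewrite -natr1 addrC.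
Qed.

Lemma proj_sum_step_rotate s z1 z2 : z1 \in s -> z2 \in rem z1 s ->
    1 < sqnorm z1 -> sqnorm z2 < 1 -> ortho_seq s ->
    \sum_(u <- s) sqnorm u = k.+1%:R -> (size s <= k.+1)%N ->
  proj_sum (\sum_(u <- s) outermx u).
Proof.
move=> z1s z2s z1_gt1 z2_lt1 os sum_s size_s; set t := rem z2 (rem z1 s).
have perm_s : perm_eq s [:: z1, z2 & t].
  by rewrite (permPl (perm_to_rem z1s)) perm_cons perm_to_rem.
have := pairwise_rem (@dotmx_eq0_sym _ n) z1s os.
rewrite pairwise_cons => /andP[/allP o1 os1].
have := pairwise_rem (@dotmx_eq0_sym _ n) z2s os1.
rewrite pairwise_cons => /andP[/allP o2 ot].
have [v [w [v_unit w_sqnorm rot ow]]] :=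
  rotate_orthogonal_pair z1_gt1 z2_lt1 (eqP (o1 _ z2s)).
rewrite (perm_big _ perm_s) !big_cons /= addrA rot -addrA.
apply: proj_sum_outerD; first by rewrite dotmx_sqnorm v_unit.
have -> : outermx w + \sum_(u <- t) outermx u = \sum_(u <- w :: t) outermx u.
  by rewrite big_cons.
apply: IHk; last by move: size_s; rewrite (perm_size perm_s).
- rewrite pairwise_cons ot andbT; apply/allP => u ut; apply/eqP/ow; apply/eqP.
    by apply: o1; apply: mem_rem ut.
  exact: o2.
- move: sum_s; rewrite (perm_big _ perm_s) !big_cons /= w_sqnorm => sum_s.
  by rewrite -[k%:R](addrK 1) natr1 -sum_s; ring.
Qed.

End InductionStep.

Lemma proj_sum_orthogonal_outer k s :
  ortho_seq s -> \sum_(z <- s) sqnorm z = k%:R ->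
  (size s <= k)%N -> proj_sum (\sum_(z <- s) outermx z).
Proof.
elim: k s => [|k IHk] s os sum_s size_s.
  move: size_s; rewrite leqn0 size_eq0 => /eqP->.
  by rewrite big_nil; apply: proj_sum0.
have [/hasP[z zs /eqP z_eq1]|no1] := boolP (has (fun z => sqnorm z == 1) s).
  exact: (proj_sum_step_unit IHk zs z_eq1).
have s_neq_nil : s != [::].
  apply/eqP => s_nil; move: sum_s.
  by rewrite s_nil big_nil => /esym/eqP; rewrite pnatr_eq0.
have [/hasP[z1 z1s z1_gt1]|nogt] := boolP (has (fun z => 1 < sqnorm z) s); last first.
  have sqnorm_lt1 z : z \in s -> sqnorm z < 1.
    by move=> zs; rewrite lt_neqAle (hasPn no1) // leNgt (hasPn nogt).
  by have := sum_lt_size s_neq_nil sqnorm_lt1; rewrite sum_s ltr_nat ltnNge size_s.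
have z1_neq0 : z1 != 0 by apply: contraTneq z1_gt1 => ->; rewrite sqnorm0 ltr10.
have [size_le|size_gt] := leqP (size s) k.
  (* With at most k members, a zero vector can play the member of weight < 1. *)
  have -> : \sum_(z <- s) outermx z = \sum_(z <- 0 :: s) outermx z.
    by rewrite big_cons outermx0 add0r.
  apply: (proj_sum_step_rotate IHk (z1 := z1) (z2 := 0)) => //.
  - by rewrite inE z1s orbT.
  - by rewrite /= eq_sym (negbTE z1_neq0) mem_head.
  - by rewrite sqnorm0 ltr01.
  - by rewrite pairwise_cons os andbT; apply/allP => u _; rewrite linear0l.
  - by rewrite big_cons sqnorm0 add0r.
have [/hasP[z2 z2s z2_lt1]|nolt] := boolP (has (fun z => sqnorm z < 1) (rem z1 s)).
  exact: (proj_sum_step_rotate IHk z1s z2s).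
have sqnorm_gt1 z : z \in s -> 1 < sqnorm z.
  rewrite (perm_mem (perm_to_rem z1s)) inE => /predU1P[-> //|zs1].
  rewrite ltNge le_eqVlt (negbTE (hasPn no1 _ (mem_rem zs1))).
  by rewrite (negbTE (hasPn nolt _ zs1)).
by have := size_lt_sum s_neq_nil sqnorm_gt1; rewrite sum_s ltr_nat ltnNge size_gt.
Qed.

End Decomposition.

Theorem theorem5p1 (R : realType) (n : nat) (A : 'M[R[i]]_n) :
  psd_mx A ->
  (exists k : nat, \tr A = k%:R) ->
  (exists P : 'M[R[i]]_n, is_range_proj A P /\ \tr P <= \tr A) ->
  exists s : seq 'M[R[i]]_n,
    (forall P, P \in s -> orth_proj_mx P) /\ A = \sum_(P <- s) P.
Proof.
move=> psdA [k trA] [P [[projP rangeP] trP]].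
have [s [os defA size_s]] := psd_sum_outer psdA.
rewrite -/(proj_sum A) defA; apply: (proj_sum_orthogonal_outer (k := k) os).
  apply: (@complexI R); rewrite rmorph_sum rmorph_nat -trA defA raddf_sum /=.
  by apply: eq_bigr => z _; rewrite mxtrace_outermx dotmx_sqnorm.
have rkPA : \rank P = \rank A by rewrite -mxrank_tr (eqmxP rangeP) mxrank_tr.
by rewrite size_s -rkPA -(ler_nat R[i]) -orth_proj_trace // -trA.
Qed.
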